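(* Let $0<\alpha<1$ and $p,q>0$. If $R_{\alpha,p}(A,B)\le_\lambda\mathcal{A}_{\alpha,q}(A,B)$ holds for all positive definite $2\times2$ matrices $A,B$, then $\alpha(1-\alpha)p\le q$.
   Context: For positive definite $A,B$: $R_{\alpha,p}(A,B):=\bigl(A^{\frac{1-\alpha}{2}p}B^{\alpha p}A^{\frac{1-\alpha}{2}p}\bigr)^{1/p}$ and $\mathcal{A}_{\alpha,q}(A,B):=((1-\alpha)A^q+\alpha B^q)^{1/q}$. For positive semidefinite $n\times n$ matrices $X,Y$ with eigenvalues $\lambda_1(X)\ge\dots\ge\lambda_n(X)$ (with multiplicities), $X\le_\lambda Y$ means $\lambda_i(X)\le\lambda_i(Y)$ for each $i=1,\dots,n$. *)

From HB Require Import structures.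
From mathcomp Require Import all_boot all_order all_algebra.
From mathcomp Require Import sesquilinear spectral.
From mathcomp Require Import reals exp.
From mathcomp Require Import complex.
From Stdlib Require Import ClassicalEpsilon.

Set Implicit Arguments.
Unset Strict Implicit.
Unset Printing Implicit Defensive.

Import Order.TTheory GRing.Theory Num.Theory.
Local Open Scope ring_scope.
Local Open Scope sesquilinear_scope.

Section MatrixFunctions.
Variable R : realType.
Local Notation C := R[i].

Definition realC (r : R) : C := Complex r 0.

Definition ctrmx m n (M : 'M[C]_(m, n)) : 'M[C]_(n, m) := M ^t*.

Definition posdef n (A : 'M[C]_n) : Prop :=
  ctrmx A = A /\ forall v : 'rV[C]_n, v != 0 -> 0 < (v *m A *m ctrmx v) 0 0.

Definition spectral_decomp n (A : 'M[C]_n) (p : 'M[C]_n * 'rV[R]_n) : Prop :=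
  p.1 \is unitarymx /\ A = ctrmx p.1 *m diag_mx (map_mx realC p.2) *m p.1.

(* some spectral decomposition (exists for Hermitian matrices) *)
Definition some_decomp n (A : 'M[C]_n) : 'M[C]_n * 'rV[R]_n :=
  epsilon (inhabits (1%:M, 0)) (spectral_decomp A).

Definition mpow n (A : 'M[C]_n) (t : R) : 'M[C]_n :=
  let p := some_decomp A in
  ctrmx p.1 *m diag_mx (map_mx (fun x => realC (powR x t)) p.2) *m p.1.

Definition eigs n (X : 'M[C]_n) : seq R :=
  sort (fun x y : R => y <= x) [seq (some_decomp X).2 0 i | i <- enum 'I_n].

(* lambda_i(X), i = 0 .. n-1 (0-based index) *)
Definition lambda n (X : 'M[C]_n) (i : 'I_n) : R := nth 0 (eigs X) i.

Definition le_lambda n (X Y : 'M[C]_n) : Prop :=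
  forall i : 'I_n, lambda X i <= lambda Y i.

Definition Rmean n (alpha p : R) (A B : 'M[C]_n) : 'M[C]_n :=
  mpow (mpow A ((1 - alpha) * p / 2) *m mpow B (alpha * p)
          *m mpow A ((1 - alpha) * p / 2)) (p^-1).

Definition Amean n (alpha q : R) (A B : 'M[C]_n) : 'M[C]_n :=
  mpow (realC (1 - alpha) *: mpow A q + realC alpha *: mpow B q) (q^-1).

End MatrixFunctions.

From mathcomp Require Import all_boot all_order all_algebra.
From mathcomp Require Import sesquilinear spectral.
From mathcomp Require Import reals exp.
From mathcomp Require Import complex.
From mathcomp Require Import ring lra.
From Stdlib Require Import ClassicalEpsilon.
Import Order.TTheory GRing.Theory Num.Theory.
Local Open Scope ring_scope.

(* Take A = diag(1, δ) and B = V^* diag(1, δ) V, where V is the rotation by an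
   angle θ with sin² θ = s.  Since A^t fixes e₁, the quadratic form of
   A^t B^{αp} A^t at e₁ is that of B^{αp}, which is at least cos² θ = 1 - s;
   hence λ₁(R_{α,p}(A, B)) ≥ (1 - s)^{1/p}.  On the other side
   (1-α) A^q + α B^q ≤ (1-α) P + α Q + δ^q I for the rank-one projections P, Q
   onto two lines at angle θ, and ‖(1-α) P + α Q‖ ≤ 1 - α(1-α) s; hence
   λ₁(𝒜_{α,q}(A, B)) ≤ (1 - α(1-α) s + δ^q)^{1/q}.  The hypothesis therefore
   gives (1 - s)^{q/p} ≤ 1 - α(1-α) s + δ^q, while (1 - s)^{q/p} ≥
   1 - (q/p) s/(1 - s); when q/p < α(1-α), a small s and then a small δ make
   these incompatible. *)

Section ConjugateTranspose.
Context {R : realType}.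
Local Notation C := R[i].
Local Notation realC := (@realC R).
Local Notation diagR d := (diag_mx (map_mx realC d)).

Lemma realCD (a b : R) : realC (a + b) = realC a + realC b.
Proof. by apply/eqP; rewrite eq_complex /= addr0 !eqxx. Qed.

Lemma realCN (a : R) : realC (- a) = - realC a.
Proof. by apply/eqP; rewrite eq_complex /= oppr0 !eqxx. Qed.

Lemma realCM (a b : R) : realC (a * b) = realC a * realC b.
Proof. by apply/eqP; rewrite eq_complex /= !mulr0 mul0r subr0 addr0 !eqxx. Qed.

Lemma realC_sum n (F : 'I_n -> R) : realC (\sum_i F i) = \sum_i realC (F i).
Proof. exact: (big_morph realC realCD). Qed.

Lemma realC_inj : injective realC.
Proof. by move=> x y []. Qed.

Lemma conjC_realC (r : R) : (realC r)^* = realC r.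
Proof. by apply/eqP; rewrite eq_complex /= oppr0 !eqxx. Qed.

Lemma realC_Re (z : C) : z \is Num.real -> realC (complex.Re z) = z.
Proof.
case: z => a b; rewrite realE !lecE /= => /orP[] /andP[/eqP b0 _];
  by rewrite /realC b0.
Qed.

Lemma ctrmx_mul m n k (A : 'M[C]_(m, n)) (B : 'M[C]_(n, k)) :
  ctrmx (A *m B) = ctrmx B *m ctrmx A.
Proof. by rewrite /ctrmx trmx_mul map_mxM. Qed.

Lemma ctrmxK m n (A : 'M[C]_(m, n)) : ctrmx (ctrmx A) = A.
Proof. exact: trmxCK. Qed.

Lemma ctrmxD m n (A B : 'M[C]_(m, n)) : ctrmx (A + B) = ctrmx A + ctrmx B.
Proof. by rewrite /ctrmx linearD /= map_mxD. Qed.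

Lemma ctrmxZ m n (r : R) (A : 'M[C]_(m, n)) :
  ctrmx (realC r *: A) = realC r *: ctrmx A.
Proof. by apply/matrixP => i j; rewrite !mxE rmorphM /= conjC_realC. Qed.

Lemma ctrmx1 n : ctrmx (1%:M : 'M[C]_n) = 1%:M.
Proof. by rewrite /ctrmx trmx1 map_mx1. Qed.

Lemma ctrmx_diag n (d : 'rV[R]_n) : ctrmx (diagR d) = diagR d.
Proof.
apply/matrixP => i j; rewrite !mxE; case: (eqVneq i j) => [->|_].
  by rewrite !mulr1n conjC_realC.
by rewrite !mulr0n conjC0.
Qed.

Lemma hermitian_sandwich {n} {A B : 'M[C]_n} :
  ctrmx A = A -> ctrmx B = B -> ctrmx (A *m B *m A) = A *m B *m A.
Proof. by move=> hermA hermB; rewrite !ctrmx_mul hermA hermB mulmxA. Qed.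

Lemma hermitian_lincomb {n} {X Y : 'M[C]_n} {a b : R} :
  ctrmx X = X -> ctrmx Y = Y ->
  ctrmx (realC a *: X + realC b *: Y) = realC a *: X + realC b *: Y.
Proof. by move=> hermX hermY; rewrite ctrmxD !ctrmxZ hermX hermY. Qed.

Lemma unitarymx_mulmxC {n} {U : 'M[C]_n} : U \is unitarymx -> U *m ctrmx U = 1%:M.
Proof. by move/unitarymxP. Qed.

Lemma unitarymx_mulCmx {n} {U : 'M[C]_n} : U \is unitarymx -> ctrmx U *m U = 1%:M.
Proof. by move/unitarymx_mulmxC/mulmx1C. Qed.

End ConjugateTranspose.

Section SpectralCalculus.
Context {R : realType}.
Local Notation C := R[i].
Local Notation realC := (@realC R).
Local Notation diagR d := (diag_mx (map_mx realC d)).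

Lemma spectral_decomp_some {n} {X : 'M[C]_n} {p} :
  spectral_decomp X p -> spectral_decomp X (some_decomp X).
Proof. by move=> Xp; apply: epsilon_spec; exists p. Qed.

Lemma spectral_decomp_hermitian {n} {X : 'M[C]_n} {U d} :
  spectral_decomp X (U, d) -> ctrmx X = X.
Proof. by case=> _ /= ->; rewrite !ctrmx_mul ctrmxK ctrmx_diag mulmxA. Qed.

Lemma hermitian_spectral_decomp {n} {X : 'M[C]_n} :
  ctrmx X = X -> exists p, spectral_decomp X p.
Proof.
move=> hermX; have Xherm : X \is hermsymmx.
  by apply/is_hermitianmxP; rewrite expr0 scale1r; exact: esym.
exists (spectralmx X, map_mx (@complex.Re R) (spectral_diag X)).
split=> /=; first exact: spectral_unitarymx.
have -> : map_mx realC (map_mx (@complex.Re R) (spectral_diag X)) = spectral_diag X.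
  apply/matrixP => i j; rewrite !mxE; apply: realC_Re.
  exact: (mxOverP (hermitian_spectral_diag_real Xherm)).
rewrite /ctrmx -invmx_unitary ?spectral_unitarymx //.
exact/orthomx_spectralP/hermitian_normalmx.
Qed.

(* Entrywise T_ij d_j = e_i T_ij, so f d_j = f e_i wherever T_ij <> 0. *)
Lemma diag_intertwine_map (f : R -> R) {n} {T : 'M[C]_n} {d e : 'rV[R]_n} :
  T *m diagR d = diagR e *m T ->
  T *m diag_mx (map_mx (fun x => realC (f x)) d) =
    diag_mx (map_mx (fun x => realC (f x)) e) *m T.
Proof.
move=> Tde; apply/matrixP => i j; rewrite mul_mx_diag mul_diag_mx !mxE.
have := congr1 (fun M : 'M[C]_n => M i j) Tde.
rewrite /= mul_mx_diag mul_diag_mx !mxE.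
have [->|Tij_neq0] := eqVneq (T i j) 0; first by rewrite !(mulr0, mul0r).
move=> Tdij; suff /realC_inj -> : realC (d 0 j) = realC (e 0 i) by exact: mulrC.
by apply: (mulfI Tij_neq0); rewrite Tdij mulrC.
Qed.

Lemma spectral_decomp_map_uniq (f : R -> R) {n} {X : 'M[C]_n} {U d W e} :
  spectral_decomp X (U, d) -> spectral_decomp X (W, e) ->
  ctrmx U *m diag_mx (map_mx (fun x => realC (f x)) d) *m U =
  ctrmx W *m diag_mx (map_mx (fun x => realC (f x)) e) *m W.
Proof.
case=> /= Uu XU [] /= Wu XW.
have Tde : (W *m ctrmx U) *m diagR d = diagR e *m (W *m ctrmx U).
  transitivity (W *m X *m ctrmx U).
    by rewrite XU !mulmxA -[_ *m U *m ctrmx U]mulmxA (unitarymx_mulmxC Uu) mulmx1.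
  by rewrite XW !mulmxA (unitarymx_mulmxC Wu) mul1mx -!mulmxA.
have TU : W *m ctrmx U *m U = W by rewrite -mulmxA (unitarymx_mulCmx Uu) mulmx1.
have WT : ctrmx W *m (W *m ctrmx U) = ctrmx U.
  by rewrite mulmxA (unitarymx_mulCmx Wu) mul1mx.
rewrite -{2}TU mulmxA -[ctrmx W *m _ *m _]mulmxA -(diag_intertwine_map f Tde).
by rewrite mulmxA WT.
Qed.

Lemma mpow_spectral_decomp {n} {X : 'M[C]_n} {U d} t :
  spectral_decomp X (U, d) ->
  spectral_decomp (mpow X t) (U, map_mx (fun x => powR x t) d).
Proof.
move=> XUd; split=> /=; first by case: XUd.
rewrite -map_mx_comp /mpow; case: (some_decomp X) (spectral_decomp_some XUd) => W e XWe.
exact: (spectral_decomp_map_uniq (fun x => powR x t) XWe XUd).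
Qed.

Lemma mpow_hermitian {n} (X : 'M[C]_n) t : ctrmx (mpow X t) = mpow X t.
Proof.
rewrite /mpow.
have -> : map_mx (fun x => realC (powR x t)) (some_decomp X).2 =
    map_mx realC (map_mx (fun x => powR x t) (some_decomp X).2).
  by apply/matrixP => i j; rewrite !mxE.
by rewrite !ctrmx_mul ctrmxK ctrmx_diag mulmxA.
Qed.

End SpectralCalculus.

Section QuadraticForms.
Context {R : realType}.
Local Notation C := R[i].
Local Notation realC := (@realC R).
Local Notation diagR d := (diag_mx (map_mx realC d)).

Definition sqnormc (z : C) : R := complex.Re z ^+ 2 + complex.Im z ^+ 2.

Definition sqnormv {n} (v : 'rV[C]_n) : R := \sum_i sqnormc (v 0 i).

Definition qform {n} (X : 'M[C]_n) (v : 'rV[C]_n) : C := (v *m X *m ctrmx v) 0 0.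

Lemma sqnormc_ge0 z : 0 <= sqnormc z.
Proof. by rewrite addr_ge0 ?sqr_ge0. Qed.

Lemma sqnormc_realC (x : R) : sqnormc (realC x) = x ^+ 2.
Proof. by rewrite /sqnormc /= expr0n addr0. Qed.

Lemma sqnormc_gt0 z : z != 0 -> 0 < sqnormc z.
Proof.
case: z => a b ab_neq0; rewrite /sqnormc /=.
have [a0 | a_neq0] := eqVneq a 0.
  have b_neq0 : b != 0 by apply: contraNneq ab_neq0 => b0; rewrite a0 b0.
  by rewrite ltr_pwDr ?sqr_ge0 // exprn_even_gt0.
by rewrite ltr_pwDl ?sqr_ge0 // exprn_even_gt0.
Qed.

Lemma mul_realC_conjC (z : C) (r : R) : z * realC r * z^* = realC (r * sqnormc z).
Proof.
case: z => a b; rewrite /realC /sqnormc /=; apply/eqP; rewrite eq_complex /=.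
by apply/andP; split; apply/eqP; ring.
Qed.

Lemma qform_spectral {n} {X : 'M[C]_n} {U d} (v : 'rV[C]_n) :
  spectral_decomp X (U, d) ->
  qform X v = realC (\sum_i d 0 i * sqnormc ((v *m ctrmx U) 0 i)).
Proof.
case=> _ /= ->; rewrite /qform.
have -> : v *m (ctrmx U *m diagR d *m U) *m ctrmx v =
    v *m ctrmx U *m diagR d *m ctrmx (v *m ctrmx U).
  by rewrite ctrmx_mul ctrmxK !mulmxA.
rewrite mxE realC_sum; apply: eq_bigr => i _.
by rewrite mul_mx_diag /ctrmx !mxE mul_realC_conjC.
Qed.

Lemma mulmx_ctrmx_sqnormv {n} (v : 'rV[C]_n) : (v *m ctrmx v) 0 0 = realC (sqnormv v).
Proof.
rewrite mxE realC_sum; apply: eq_bigr => i _.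
by rewrite /ctrmx !mxE -[X in X * _]mulr1 -(mul1r (sqnormc _)) -mul_realC_conjC.
Qed.

Lemma sqnormv_unitary {n} {U : 'M[C]_n} (v : 'rV[C]_n) :
  U \is unitarymx -> sqnormv (v *m ctrmx U) = sqnormv v.
Proof.
move=> Uu; apply: realC_inj; rewrite -!mulmx_ctrmx_sqnormv ctrmx_mul ctrmxK.
by rewrite -(mulmxA v) (mulmxA (ctrmx U)) (unitarymx_mulCmx Uu) mul1mx.
Qed.

Lemma row_mul_ctrmx_unitary {n} {U : 'M[C]_n} i :
  U \is unitarymx -> row i U *m ctrmx U = delta_mx 0 i.
Proof. by move=> Uu; rewrite rowE -mulmxA (unitarymx_mulmxC Uu) mulmx1. Qed.

Lemma sqnormc_delta {n} (i k : 'I_n) :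
  sqnormc ((delta_mx 0 i : 'rV[C]_n) 0 k) = (k == i)%:R.
Proof.
rewrite mxE eqxx /=; case: (k == i); rewrite ?mulr1n ?mulr0n /sqnormc /=.
  by rewrite expr1n expr0n /= addr0.
by rewrite expr0n /= addr0.
Qed.

Lemma sum_sqnormc_delta {n} (d : 'rV[R]_n) i :
  \sum_k d 0 k * sqnormc ((delta_mx 0 i : 'rV[C]_n) 0 k) = d 0 i.
Proof.
rewrite (bigD1 i) //= sqnormc_delta eqxx mulr1 big1 ?addr0 // => k /negPf k_neq_i.
by rewrite sqnormc_delta k_neq_i mulr0.
Qed.

Lemma sqnormv_delta {n} (i : 'I_n) : sqnormv (delta_mx 0 i : 'rV[C]_n) = 1.
Proof.
rewrite /sqnormv (bigD1 i) //= sqnormc_delta eqxx big1 ?addr0 // => k /negPf k_neq_i.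
by rewrite sqnormc_delta k_neq_i.
Qed.

Lemma sqnormv_row_unitary {n} {U : 'M[C]_n} i :
  U \is unitarymx -> sqnormv (row i U) = 1.
Proof.
by move=> Uu; rewrite -(sqnormv_unitary _ Uu) row_mul_ctrmx_unitary // sqnormv_delta.
Qed.

Lemma qform_row_spectral {n} {X : 'M[C]_n} {U d} i :
  spectral_decomp X (U, d) -> qform X (row i U) = realC (d 0 i).
Proof.
move=> XUd; rewrite (qform_spectral _ XUd); case: XUd => Uu _.
by rewrite row_mul_ctrmx_unitary // sum_sqnormc_delta.
Qed.

Lemma qform_le_spectral {n} {X : 'M[C]_n} {U d} (v : 'rV[C]_n) {c : R} :
  spectral_decomp X (U, d) -> (forall i, d 0 i <= c) ->
  complex.Re (qform X v) <= c * sqnormv v.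
Proof.
move=> XUd d_le_c; rewrite (qform_spectral _ XUd) /=; case: XUd => Uu _.
rewrite -(sqnormv_unitary v Uu) /sqnormv mulr_sumr; apply: ler_sum => i _.
by rewrite ler_wpM2r ?sqnormc_ge0.
Qed.

Lemma posdef_spectral {n} {X : 'M[C]_n} {U d} :
  spectral_decomp X (U, d) -> (forall i, 0 < d 0 i) -> posdef X.
Proof.
move=> XUd d_gt0; split; first exact: spectral_decomp_hermitian XUd.
move=> v v_neq0; rewrite -[_ 0 0]/(qform X v) (qform_spectral _ XUd) ltcE /= eqxx /=.
case: XUd => Uu _; set w := v *m ctrmx U.
have [i wi_neq0] : exists i, w 0 i != 0.
  apply/existsP; apply: contraNT v_neq0 => /existsPn w0.
  have -> : v = w *m U by rewrite /w -mulmxA (unitarymx_mulCmx Uu) mulmx1.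
  suff -> : w = 0 by rewrite mul0mx.
  by apply/matrixP => a b; rewrite ord1 [RHS]mxE; exact/eqP/negPn/w0.
rewrite (bigD1 i) //= ltr_pwDl ?mulr_gt0 ?sqnormc_gt0 //.
by apply: sumr_ge0 => k _; rewrite mulr_ge0 ?sqnormc_ge0 // ltW.
Qed.

Lemma qform_sandwich {n} {A : 'M[C]_n} (B : 'M[C]_n) {v : 'rV[C]_n} :
  ctrmx A = A -> v *m A = v -> qform (A *m B *m A) v = qform B v.
Proof.
move=> hermA vA; have Av : A *m ctrmx v = ctrmx v by rewrite -hermA -ctrmx_mul vA.
by rewrite /qform !mulmxA vA -mulmxA Av.
Qed.

Lemma Re_qform_lincomb {n} (x y : R) (Y Z : 'M[C]_n) (v : 'rV[C]_n) :
  complex.Re (qform (realC x *: Y + realC y *: Z) v) =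
    x * complex.Re (qform Y v) + y * complex.Re (qform Z v).
Proof.
rewrite /qform mulmxDr mulmxDl -!scalemxAr -!scalemxAl.
move: (v *m Y *m ctrmx v) (v *m Z *m ctrmx v) => M N; rewrite !mxE.
by case: (M 0 0) (N 0 0) => [a1 b1] [a2 b2]; rewrite /realC /=; ring.
Qed.

End QuadraticForms.

Section LargestEigenvalue.
Context {R : realType} {n : nat}.
Local Notation C := R[i].
Implicit Types X : 'M[C]_n.+1.

Lemma lambda0_eigenvalue X : exists j, lambda X ord0 = (some_decomp X).2 0 j.
Proof.
have : lambda X ord0 \in eigs X.
  by apply: mem_nth; rewrite size_sort size_map size_enum_ord.
by rewrite mem_sort => /mapP[j _ ->]; exists j.
Qed.

Lemma eigenvalue_le_lambda0 X j : (some_decomp X).2 0 j <= lambda X ord0.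
Proof.
have : (some_decomp X).2 0 j \in eigs X by rewrite mem_sort map_f ?mem_enum.
have : sorted (fun x y : R => y <= x) (eigs X) by apply: sort_sorted; exact: ge_total.
rewrite /lambda; case: (eigs X) => [//|x s] /= sorted_xs.
rewrite in_cons => /predU1P[-> //|in_s].
exact: (allP (order_path_min ge_trans sorted_xs)).
Qed.

Lemma qform_le_lambda0 {X p} (v : 'rV[C]_n.+1) :
  spectral_decomp X p -> sqnormv v = 1 -> complex.Re (qform X v) <= lambda X ord0.
Proof.
move=> /spectral_decomp_some; case: (some_decomp X) (@eigenvalue_le_lambda0 X) => W e.
by move=> e_le XWe v1; have := qform_le_spectral v XWe e_le; rewrite v1 mulr1.
Qed.

Lemma spectral_le_lambda0 {X U d} i :
  spectral_decomp X (U, d) -> d 0 i <= lambda X ord0.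
Proof.
move=> XUd; have := qform_le_lambda0 (row i U) XUd; rewrite (qform_row_spectral i XUd).
by case: XUd => Uu _; apply; exact: sqnormv_row_unitary.
Qed.

Lemma lambda0_le_spectral {X U d} {c : R} :
  spectral_decomp X (U, d) -> (forall i, d 0 i <= c) -> lambda X ord0 <= c.
Proof.
move=> XUd d_le_c; have [j ->] := lambda0_eigenvalue X.
case: (some_decomp X) (spectral_decomp_some XUd) => W e XWe /=.
have := qform_le_spectral (row j W) XUd d_le_c; rewrite (qform_row_spectral j XWe).
by case: XWe => Wu _; rewrite sqnormv_row_unitary // mulr1.
Qed.

Lemma powR_lambda0_le_mpow {X} (t : R) :
  ctrmx X = X -> powR (lambda X ord0) t <= lambda (mpow X t) ord0.
Proof.
move=> /hermitian_spectral_decomp[p /spectral_decomp_some].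
have [j ->] := lambda0_eigenvalue X; case: (some_decomp X) => W e XWe /=.
by have := spectral_le_lambda0 j (mpow_spectral_decomp t XWe); rewrite mxE.
Qed.

Lemma lambda0_mpow_le {X} {K t : R} : 0 <= t -> ctrmx X = X ->
  (forall v, sqnormv v = 1 -> 0 <= complex.Re (qform X v) <= K) ->
  lambda (mpow X t) ord0 <= powR K t.
Proof.
move=> t_ge0 /hermitian_spectral_decomp[p /spectral_decomp_some] + qX.
case: (some_decomp X) => W e XWe.
apply: (lambda0_le_spectral (mpow_spectral_decomp t XWe)) => i; rewrite mxE.
have /andP[ei_ge0 ei_leK] : 0 <= e 0 i <= K.
  have := qX _ (sqnormv_row_unitary i (proj1 XWe)).
  by rewrite (qform_row_spectral i XWe).
by apply: ge0_ler_powR; rewrite ?nnegrE // (le_trans ei_ge0).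
Qed.

End LargestEigenvalue.

Section RotatedDiagonal.
Context {R : realType}.
Local Notation C := R[i].
Local Notation realC := (@realC R).
Local Notation diagR d := (diag_mx (map_mx realC d)).
Local Notation i1 := (lift ord0 ord0 : 'I_2).
Local Notation e1 := (delta_mx 0 ord0 : 'rV[C]_2).

Lemma big_ord2 (V : nmodType) (F : 'I_2 -> V) : \sum_i F i = F ord0 + F i1.
Proof. by rewrite big_ord_recl big_ord1. Qed.

Definition rv2 (a b : R) : 'rV[R]_2 := \row_j (if j == ord0 then a else b).

Definition rotmx (c s : R) : 'M[C]_2 := \matrix_(i, j)
  realC (if i == ord0 then if j == ord0 then c else s else if j == ord0 then - s else c).

Definition rotated_diag (c s a b : R) : 'M[C]_2 :=
  ctrmx (rotmx c s) *m diagR (rv2 a b) *m rotmx c s.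

Lemma map_rv2 (f : R -> R) a b : map_mx f (rv2 a b) = rv2 (f a) (f b).
Proof. by apply/matrixP => i j; rewrite !mxE; case: ifP. Qed.

Lemma rotmx_unitary c s : c ^+ 2 + s ^+ 2 = 1 -> rotmx c s \is unitarymx.
Proof.
move=> cs1; apply/unitarymxP/matrixP => i j; rewrite !mxE big_ord2 !mxE.
case: i => [[|[|//]] ?]; case: j => [[|[|//]] ?];
  rewrite /= ?mulr1n ?mulr0n !conjC_realC -!realCM -realCD;
  apply/eqP; rewrite eq_complex /= eqxx andbT; apply/eqP; nra.
Qed.

Lemma spectral_decomp_rotated_diag {c s} a b : c ^+ 2 + s ^+ 2 = 1 ->
  spectral_decomp (rotated_diag c s a b) (rotmx c s, rv2 a b).
Proof. by move=> cs1; split; first exact: rotmx_unitary. Qed.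

Lemma posdef_rotated_diag {c s a b : R} : c ^+ 2 + s ^+ 2 = 1 -> 0 < a -> 0 < b ->
  posdef (rotated_diag c s a b).
Proof.
move=> cs1 a_gt0 b_gt0; apply: posdef_spectral (spectral_decomp_rotated_diag _ _ cs1) _.
by move=> i; rewrite mxE; case: ifP.
Qed.

Lemma qform_rotmx {Y : 'M[C]_2} {c s a b} (v : 'rV[C]_2) :
  spectral_decomp Y (rotmx c s, rv2 a b) ->
  complex.Re (qform Y v) = a * sqnormc (realC c * v 0 ord0 + realC s * v 0 i1)
                         + b * sqnormc (realC c * v 0 i1 - realC s * v 0 ord0).
Proof.
move=> Yd; rewrite (qform_spectral v Yd) /= big_ord2 !mxE !big_ord2 !mxE /=.
by rewrite !conjC_realC realCN mulrN ![v 0 _ * _]mulrC [- _ + _]addrC.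
Qed.

Lemma mpow_rotated_diag c s a b t : c ^+ 2 + s ^+ 2 = 1 ->
  mpow (rotated_diag c s a b) t = rotated_diag c s (powR a t) (powR b t).
Proof.
move=> cs1; have := mpow_spectral_decomp t (spectral_decomp_rotated_diag a b cs1).
by case=> _ /= ->; rewrite map_rv2.
Qed.

Lemma unit_circle_1_0 : 1 ^+ 2 + 0 ^+ 2 = 1 :> R.
Proof. by rewrite expr1n expr0n addr0. Qed.

Lemma rotmx10 : rotmx 1 0 = 1%:M.
Proof.
apply/matrixP => i j; rewrite !mxE.
by case: i => [[|[|//]] ?]; case: j => [[|[|//]] ?]; rewrite /= ?oppr0.
Qed.

Lemma delta_mul_rotated_diag10 b : e1 *m rotated_diag 1 0 1 b = e1.
Proof.
rewrite /rotated_diag rotmx10 ctrmx1 mul1mx mulmx1.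
apply/matrixP => i j; rewrite mul_mx_diag !mxE.
by case: j => [[|[|//]] ?]; rewrite /= ?mulr1 // -[_ == ord0]/false andbF mul0r.
Qed.

(* With c^2 + s^2 = 1, the difference of the two sides is
   |a s u - c w|^2 + (1 - a)^2 s^2 |w|^2. *)
Lemma two_projections_le (a : R) {c s : R} (u w : C) : c ^+ 2 + s ^+ 2 = 1 ->
  (1 - a) * sqnormc u + a * sqnormc (realC c * u + realC s * w) <=
    (1 - a * (1 - a) * s ^+ 2) * (sqnormc u + sqnormc w).
Proof.
move=> cs1; case: u w => [x1 x2] [y1 y2]; rewrite /sqnormc /=.
have cs1_mul :
    (c ^+ 2 + s ^+ 2 - 1) * (a * (x1 ^+ 2 + x2 ^+ 2) + (y1 ^+ 2 + y2 ^+ 2)) = 0.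
  by rewrite cs1 subrr mul0r.
have := sqr_ge0 (a * s * x1 - c * y1); have := sqr_ge0 (a * s * x2 - c * y2).
have := mulr_ge0 (sqr_ge0 (s * (1 - a))) (addr_ge0 (sqr_ge0 y1) (sqr_ge0 y2)).
lra.
Qed.

Lemma sqnormc_rotmx {c s : R} (u w : C) : c ^+ 2 + s ^+ 2 = 1 ->
  sqnormc (realC c * u + realC s * w) + sqnormc (realC c * w - realC s * u) =
    sqnormc u + sqnormc w.
Proof.
move=> cs1; case: u w => [x1 x2] [y1 y2]; rewrite /sqnormc /=.
have cs1_mul : (c ^+ 2 + s ^+ 2 - 1) * (x1 ^+ 2 + x2 ^+ 2 + y1 ^+ 2 + y2 ^+ 2) = 0.
  by rewrite cs1 subrr mul0r.
lra.
Qed.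

End RotatedDiagonal.

Section RotatedCounterexample.
Context {R : realType}.
Local Notation C := R[i].
Local Notation realC := (@realC R).
Local Notation i1 := (lift ord0 ord0 : 'I_2).
Local Notation e1 := (delta_mx 0 ord0 : 'rV[C]_2).

Lemma Rmean_rotated_lambda0_ge (alpha b : R) {p c s : R} :
  0 < p -> c ^+ 2 + s ^+ 2 = 1 ->
  powR (c ^+ 2) p^-1 <=
    lambda (Rmean alpha p (rotated_diag 1 0 1 b) (rotated_diag c s 1 b)) ord0.
Proof.
move=> p_gt0 cs1; rewrite /Rmean !mpow_rotated_diag ?unit_circle_1_0 // !powR1.
set A := rotated_diag 1 0 1 _; set B := rotated_diag c s 1 _.
have hermA : ctrmx A = A.
  exact: spectral_decomp_hermitian (spectral_decomp_rotated_diag _ _ unit_circle_1_0).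
have B_decomp : spectral_decomp B (rotmx c s, rv2 1 (powR b (alpha * p))).
  exact: spectral_decomp_rotated_diag.
have hermM := hermitian_sandwich hermA (spectral_decomp_hermitian B_decomp).
apply: le_trans (powR_lambda0_le_mpow _ hermM).
have [p_M M_decomp] := hermitian_spectral_decomp hermM.
have c2_le : c ^+ 2 <= lambda (A *m B *m A) ord0.
  apply: le_trans (qform_le_lambda0 e1 M_decomp (sqnormv_delta ord0)).
  rewrite qform_sandwich ?delta_mul_rotated_diag10 // (qform_rotmx _ B_decomp) !mxE /=.
  rewrite mulr1 mulr0 addr0 mul1r sqnormc_realC lerDl.
  by rewrite mulr_ge0 ?powR_ge0 ?sqnormc_ge0.
apply: ge0_ler_powR; rewrite ?nnegrE ?invr_ge0 ?(ltW p_gt0) ?sqr_ge0 //.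
exact: le_trans (sqr_ge0 c) c2_le.
Qed.

Lemma qform_Amean_rotated_bounds (alpha q c s b : R) (v : 'rV[C]_2) :
  0 <= alpha <= 1 -> c ^+ 2 + s ^+ 2 = 1 -> sqnormv v = 1 ->
  0 <= complex.Re (qform (realC (1 - alpha) *: mpow (rotated_diag 1 0 1 b) q
                          + realC alpha *: mpow (rotated_diag c s 1 b) q) v)
    <= 1 - alpha * (1 - alpha) * s ^+ 2 + powR b q.
Proof.
move=> /andP[a_ge0 a_le1] cs1; rewrite /sqnormv big_ord2 => v1.
rewrite !mpow_rotated_diag ?unit_circle_1_0 // !powR1 Re_qform_lincomb.
have := powR_ge0 b q; set e := powR b q => e_ge0.
rewrite [X in alpha * X](qform_rotmx v (spectral_decomp_rotated_diag 1 e cs1)).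
rewrite (qform_rotmx v (spectral_decomp_rotated_diag 1 e unit_circle_1_0)).
rewrite !mul1r !mul0r addr0 subr0.
have := two_projections_le alpha (v 0 ord0) (v 0 i1) cs1; rewrite v1 mulr1.
have := sqnormc_rotmx (v 0 ord0) (v 0 i1) cs1; rewrite v1.
set X := sqnormc (v 0 ord0); set Y := sqnormc (v 0 i1).
set W0 := sqnormc (_ + _); set W1 := sqnormc (_ - _) => W1E projW0.
have a1_ge0 : 0 <= 1 - alpha by rewrite subr_ge0.
have X_ge0 : 0 <= X := sqnormc_ge0 _; have Y_ge0 : 0 <= Y := sqnormc_ge0 _.
have W0_ge0 : 0 <= W0 := sqnormc_ge0 _; have W1_ge0 : 0 <= W1 := sqnormc_ge0 _.
have aX := mulr_ge0 a1_ge0 X_ge0; have aW0 := mulr_ge0 a_ge0 W0_ge0.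
have eX := mulr_ge0 e_ge0 (addr_ge0 aX aW0).
have eY := mulr_ge0 e_ge0 (addr_ge0 (mulr_ge0 a1_ge0 Y_ge0) (mulr_ge0 a_ge0 W1_ge0)).
have e_split : e * ((1 - alpha) * (X + Y) + alpha * (W0 + W1)) = e.
  by rewrite v1 W1E; ring.
apply/andP; split; lra.
Qed.

Lemma Amean_rotated_lambda0_le (alpha b : R) {q c s : R} :
  0 <= alpha <= 1 -> 0 < q -> c ^+ 2 + s ^+ 2 = 1 ->
  lambda (Amean alpha q (rotated_diag 1 0 1 b) (rotated_diag c s 1 b)) ord0 <=
    powR (1 - alpha * (1 - alpha) * s ^+ 2 + powR b q) q^-1.
Proof.
move=> a01 q_gt0 cs1; apply: lambda0_mpow_le; first by rewrite invr_ge0 ltW.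
  exact: hermitian_lincomb (mpow_hermitian _ _) (mpow_hermitian _ _).
by move=> v; exact: qform_Amean_rotated_bounds.
Qed.

End RotatedCounterexample.

Section RealInequalities.
Context {R : realType}.

Lemma powR_1B_ge (r s : R) : 0 <= r -> 0 < s < 1 ->
  1 - r * (s / (1 - s)) <= powR (1 - s) r.
Proof.
move=> r_ge0 /andP[s_gt0 s_lt1]; have s1_gt0 : 0 < 1 - s by rewrite subr_gt0.
have ln_le : ln (1 + s / (1 - s)) <= s / (1 - s).
  apply: le_ln1Dx; apply: lt_le_trans (divr_ge0 (ltW s_gt0) (ltW s1_gt0)).
  by rewrite oppr_lt0.
have inv_s1 : 1 + s / (1 - s) = (1 - s)^-1 by field; rewrite lt0r_neq0.
rewrite inv_s1 lnV ?posrE // in ln_le.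
rewrite /powR (negPf (lt0r_neq0 s1_gt0)); apply: le_trans (expR_ge1Dx _).
by have := ler_wpM2l r_ge0 ln_le; lra.
Qed.

Lemma exists_powR_gap (b r : R) : 0 < r < b ->
  exists s eps : R, [/\ 0 < s < 1, 0 < eps & 1 - b * s + eps < powR (1 - s) r].
Proof.
move=> /andP[r_gt0 r_lt_b]; have b_gt0 := lt_trans r_gt0 r_lt_b.
pose s := (b - r) / (2 * b); pose t := r * (s / (1 - s)).
have bs : b * s = (b - r) / 2 by rewrite /s; field; rewrite lt0r_neq0.
have s_gt0 : 0 < s by rewrite divr_gt0 ?subr_gt0 ?mulr_gt0.
have s_lt1 : s < 1 by rewrite ltr_pdivrMr ?mulr_gt0 //; lra.
have t_lt_bs : t < b * s.
  rewrite /t mulrCA mulrC ltr_pM2r // ltr_pdivrMr ?subr_gt0 //; lra.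
exists s, ((b * s - t) / 2); split; rewrite ?s_gt0 ?s_lt1 //; first by lra.
by have := powR_1B_ge r s (ltW r_gt0); rewrite s_gt0 s_lt1 -/t => /(_ isT); lra.
Qed.

Lemma powR_mul_le {x y u v : R} : 0 <= x -> 0 <= y -> 0 < v ->
  powR x u <= powR y v^-1 -> powR x (u * v) <= y.
Proof.
move=> x_ge0 y_ge0 v_gt0 /(ge0_ler_powR (ltW v_gt0)).
rewrite !nnegrE !powR_ge0 -!powRrM mulVf ?gt_eqF // powRr1 //; exact.
Qed.

End RealInequalities.

Theorem theorem4p10 (R : realType) (alpha p q : R) :
  0 < alpha -> alpha < 1 -> 0 < p -> 0 < q ->
  (forall A B : 'M[R[i]]_2, posdef A -> posdef B ->
     le_lambda (Rmean alpha p A B) (Amean alpha q A B)) ->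
  alpha * (1 - alpha) * p <= q.
Proof.
move=> a_gt0 a_lt1 p_gt0 q_gt0 Rmean_le_Amean; rewrite leNgt; apply/negP => lt_qp.
have [s [eps [/andP[s_gt0 s_lt1] eps_gt0 gap]]] :
    exists s eps : R, [/\ 0 < s < 1, 0 < eps &
      1 - alpha * (1 - alpha) * s + eps < powR (1 - s) (q / p)].
  by apply: exists_powR_gap; rewrite divr_gt0 //= ltr_pdivrMr.
have a01 : 0 <= alpha <= 1 by rewrite !ltW.
pose c := Num.sqrt (1 - s); pose s' := Num.sqrt s; pose delta := powR eps q^-1.
have c2 : c ^+ 2 = 1 - s by rewrite sqr_sqrtr // subr_ge0 ltW.
have s2 : s' ^+ 2 = s by rewrite sqr_sqrtr // ltW.
have cs1 : c ^+ 2 + s' ^+ 2 = 1 by rewrite c2 s2 subrK.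
have delta_gt0 : 0 < delta by rewrite powR_gt0.
have delta_q : powR delta q = eps by rewrite -powRrM mulVf ?gt_eqF // powRr1 // ltW.
have := Rmean_le_Amean _ _ (posdef_rotated_diag unit_circle_1_0 ltr01 delta_gt0)
  (posdef_rotated_diag cs1 ltr01 delta_gt0) ord0.
move=> /(le_trans (Rmean_rotated_lambda0_ge alpha delta p_gt0 cs1)).
move=> /le_trans /(_ (Amean_rotated_lambda0_le alpha delta a01 q_gt0 cs1)).
rewrite c2 s2 delta_q => le_pow.
have s1_ge0 : 0 <= 1 - s by rewrite subr_ge0 ltW.
have K_gt0 : 0 < 1 - alpha * (1 - alpha) * s + eps by nra.
by have := powR_mul_le s1_ge0 (ltW K_gt0) q_gt0 le_pow; rewrite mulrC (lt_geF gap).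
Qed.
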